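(* Let $c\ge 1$, let $n\ge 9$, and let $\bar q$ be a positive integer divisible by $8$ with $\bar q\le 4\sqrt n$. Consider a sequence of coordinates $k_1,k_2,\dots$, each chosen independently and uniformly at random from $\{1,\dots,n\}$, and let $I$ be any block of $\bar q/4$ consecutive terms of it. Then with probability at least $1-\frac13 n^{-2c}$, there are at most $b_3=1+\ln 3+2c\ln n$ reappearing coordinates among the terms of $I$.
   Context: A term of the block is reappearing if the same coordinate already occurs at an earlier position within the block. *)

From HB Require Import structures.
From mathcomp Require Import all_boot all_order all_algebra.
From mathcomp Require Import reals exp.
Set Implicit Arguments. Unset Strict Implicit. Unset Printing Implicit Defensive.
Import Order.TTheory GRing.Theory Num.Theory.
Local Open Scope ring_scope.

(* A finite prefix k_0, ..., k_{N-1} of the random coordinate sequence;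
   coordinates {1,...,n} are represented by 'I_n = {0,...,n-1}. *)

Definition reappearing (n N : nat) (k : {ffun 'I_N -> 'I_n}) (s m : nat) : nat :=
  #|[set j : 'I_N | (s <= j < s + m)%N &&
      [exists i : 'I_N, [&& (s <= i)%N, (i < j)%N & k i == k j]]]|.

(* Uniform probability of an event on sequences in {ffun 'I_N -> 'I_n}
   (each coordinate independent and uniform on n values). *)
Definition unif_prob (R : realType) (n N : nat) (E : pred {ffun 'I_N -> 'I_n}) : R :=
  #|[set k | E k]|%:R / #|{ffun 'I_N -> 'I_n}|%:R.

From HB Require Import structures.
From mathcomp Require Import all_boot all_order all_algebra.
From mathcomp Require Import reals sequences exp ring lra.
Set Implicit Arguments. Unset Strict Implicit. Unset Printing Implicit Defensive.
Import Order.TTheory GRing.Theory Num.Theory.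

(* Union bound over the r-element subsets J of the block of m = qbar/4 terms.
   A sequence in which every position of J is reappearing is determined,
   scanning from left to right, by its values off J together with, for each
   j in J, an earlier position of the block carrying the same coordinate; so
   there are at most m^r n^(N-r) such sequences.  As m^2 <= n, the probability
   of at least r reappearing terms is at most C(m,r) m^r / n^r <= 1/r!, and for
   r = floor(b3) + 1 one has r! >= 3^(r-1) >= e^(b3-1) = 3 n^(2c). *)

Lemma exists_subset_card (T : finType) (A : {set T}) r :
  r <= #|A| -> exists2 B : {set T}, B \subset A & #|B| = r.
Proof.
move=> le_rA; exists [set x in take r (enum A)].
  by apply/subsetP => x; rewrite inE => /mem_take; rewrite mem_enum.
by rewrite cardsE (card_uniqP _) ?take_uniq ?enum_uniq // size_takel // -cardE.
Qed.

Lemma leq_card_bigcup (I T : finType) (P : pred I) (F : I -> {set T}) :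
  #|\bigcup_(i | P i) F i| <= \sum_(i | P i) #|F i|.
Proof.
elim/big_rec2: _ => [|i n U _ leUn]; first by rewrite cards0.
by rewrite (leq_trans (leq_card_setU _ U).1) ?leq_add2l.
Qed.

Section ReappearingCount.
Variables n N s m : nat.
Implicit Type k : {ffun 'I_N -> 'I_n}.

Definition block : {set 'I_N} := [set j : 'I_N | s <= j < s + m].

Definition reappearing_set k : {set 'I_N} :=
  [set j : 'I_N | (s <= j < s + m) &&
      [exists i : 'I_N, [&& s <= i, i < j & k i == k j]]].

Lemma reappearingE k : reappearing k s m = #|reappearing_set k|.
Proof. by []. Qed.

Lemma card_block : #|block| <= m.
Proof.
rewrite cardE -(size_map val (enum block)) -(size_iota s m); apply: uniq_leq_size.
  by rewrite (map_inj_uniq val_inj) enum_uniq.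
by move=> x /mapP[j jB ->]; move: jB; rewrite mem_enum inE mem_iota.
Qed.

Lemma reappearing_subset_block k : reappearing_set k \subset block.
Proof. by apply/subsetP => j; rewrite !inE => /andP[]. Qed.

Definition earlier_occurrence k (j : 'I_N) : 'I_N :=
  odflt j [pick i : 'I_N | [&& s <= i, i < j & k i == k j]].

Lemma earlier_occurrenceP k j : j \in reappearing_set k ->
  [/\ earlier_occurrence k j \in block, earlier_occurrence k j < j
    & k (earlier_occurrence k j) = k j].
Proof.
rewrite inE => /andP[/andP[_ lt_j] /existsP[i Hi]].
rewrite /earlier_occurrence; case: pickP => [i' /and3P[le_si' lt_i'j /eqP ->]|/(_ i)].
  by rewrite inE le_si' (ltn_trans lt_i'j).
by rewrite Hi.
Qed.

Definition encode (J : {set 'I_N}) k : {ffun 'I_N -> 'I_n + 'I_N} :=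
  [ffun j => if j \in J then inr (earlier_occurrence k j) else inl (k j)].

Lemma encode_inj (J : {set 'I_N}) :
  {in [set k | J \subset reappearing_set k] &, injective (encode J)}.
Proof.
move=> k1 k2; rewrite !inE => /subsetP J1 /subsetP J2 /ffunP enc12.
suff eq_lt t (j : 'I_N) : j < t -> k1 j = k2 j by apply/ffunP => j; apply: (eq_lt j.+1).
elim: t j => [//|t IH] j; rewrite ltnS => le_jt.
have := enc12 j; rewrite !ffunE; case: ifP => [jJ [eq_eo] | _ [] //].
have [_ lt1 <-] := earlier_occurrenceP (J1 _ jJ).
have [_ lt2 <-] := earlier_occurrenceP (J2 _ jJ).
by rewrite eq_eo IH // (leq_trans lt2 le_jt).
Qed.

Lemma card_reappearing_supset (J : {set 'I_N}) :
  #|[set k | J \subset reappearing_set k]| <= m ^ #|J| * n ^ (N - #|J|).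
Proof.
pose F j : {set 'I_n + 'I_N} := if j \in J then inr @: block else inl @: setT.
rewrite -(card_in_imset (@encode_inj J)).
have /subset_leq_card/leq_trans-> // :
    encode J @: [set k | J \subset reappearing_set k] \subset family F.
  apply/subsetP => g /imsetP[k]; rewrite inE => /subsetP JR ->.
  apply/familyP => j; rewrite /F ffunE; case: ifP => jJ; last by rewrite imset_f.
  by have [? _ _] := earlier_occurrenceP (JR _ jJ); rewrite imset_f.
rewrite card_family foldrE big_map big_enum (bigID (mem J)) /= leq_mul //.
  rewrite -prod_nat_const; apply: leq_prod => j jJ.
  by rewrite /F jJ card_imset ?card_block //; exact: inr_inj.
rewrite (eq_bigr (fun=> n)) => [|j /negbTE jJ]; last first.
  by rewrite /F jJ card_imset ?cardsT ?card_ord //; exact: inl_inj.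
rewrite prod_nat_const -[X in (X - _)%N](card_ord N) -(cardsC J) addKn.
apply/eq_leq/congr1.
by apply: eq_card => j; rewrite !inE.
Qed.

Lemma card_reappearing_geq r :
  #|[set k : {ffun 'I_N -> 'I_n} | r <= reappearing k s m]|
    <= 'C(m, r) * (m ^ r * n ^ (N - r)).
Proof.
pose D := [set J : {set 'I_N} | J \subset block & #|J| == r].
have cover_D : [set k : {ffun 'I_N -> 'I_n} | r <= reappearing k s m]
    \subset \bigcup_(J in D) [set k | J \subset reappearing_set k].
  apply/subsetP => k; rewrite inE reappearingE => /exists_subset_card[J JR cardJ].
  apply/bigcupP; exists J; last by rewrite inE.
  by rewrite inE cardJ eqxx (subset_trans JR (reappearing_subset_block k)).
apply: leq_trans (subset_leq_card cover_D) _.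
apply: leq_trans (leq_card_bigcup _ _) _.
apply: (@leq_trans (\sum_(J in D) m ^ r * n ^ (N - r))).
  by apply: leq_sum => J; rewrite inE => /andP[_ /eqP <-]; exact: card_reappearing_supset.
by rewrite sum_nat_const cards_draws leq_mul2r leq_bin2l ?card_block ?orbT.
Qed.
End ReappearingCount.

Lemma leq_expn2r a b e : a <= b -> a ^ e <= b ^ e.
Proof. by move=> le_ab; elim: e => [//|e IH]; rewrite !expnS leq_mul. Qed.

Lemma ffact_leq_expn a r : a ^_ r <= a ^ r.
Proof.
rewrite ffact_prod -[X in _ <= _ ^ X](card_ord r) -prod_nat_const.
by apply: leq_prod => i _; exact: leq_subr.
Qed.

Lemma card_reappearing_geq_mul_fact n N s m r : m * m <= n -> m <= N ->
  #|[set k : {ffun 'I_N -> 'I_n} | r <= reappearing k s m]| * r`! <= n ^ N.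
Proof.
move=> le_mmn le_mN; rewrite (leq_trans (leq_mul (card_reappearing_geq n N s m r) (leqnn _))) //.
have [le_rm | lt_mr] := leqP r m; last by rewrite bin_small.
rewrite mulnAC mulnA bin_ffact.
apply: (@leq_trans (m ^ r * m ^ r * n ^ (N - r))).
  by rewrite !leq_mul2r ffact_leq_expn !orbT.
rewrite -expnMn -{2}(subnKC (leq_trans le_rm le_mN)) expnD leq_mul2r.
by rewrite leq_expn2r ?orbT.
Qed.

Lemma expn3_leq_fact r : 4 <= r -> 3 ^ r <= r.+1`!.
Proof.
elim: r => [//|r IH]; rewrite leq_eqVlt => /predU1P[<- //|].
rewrite ltnS => le4r; rewrite factS expnS leq_mul ?IH //.
by rewrite !ltnS (leq_trans _ le4r).
Qed.

Local Open Scope ring_scope.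

(* From [1 - x <= expR (- x)] one gets [expR (1/6) <= 6/5], and [(6/5)^6 < 3]. *)
Lemma expR1_le3 (R : realType) : expR 1 <= 3 :> R.
Proof.
have ge_expRN : 5/6 <= expR (- (1/6) : R) by have := expR_ge1Dx (- (1/6) : R); lra.
have expR_inv := expRxMexpNx_1 (1/6 : R).
have expR_pos := expR_gt0 (1/6 : R).
have le_expR : expR (1/6 : R) <= 6/5 by nra.
have e6 : 6%:R * (1/6) = 1 :> R by rewrite mul1r divff // pnatr_eq0.
rewrite -[X in expR X]e6 expRM_natl.
apply: (le_trans (lerXn2r 6 _ _ le_expR)); rewrite ?nnegrE; [exact: ltW | lra |].
rewrite !exprS expr0; lra.
Qed.

Lemma ln3_ge1 (R : realType) : 1 <= ln 3 :> R.
Proof. by rewrite -[X in X <= _](@expRK R) ler_ln ?posrE ?expR_gt0 // expR1_le3. Qed.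

Lemma expR_le_fact_truncn (R : realType) (x : R) :
  4 <= x -> expR (x - 1) <= ((Num.truncn x).+1)`!%:R.
Proof.
move=> le4x; set t := Num.truncn x.
have le4t : (4 <= t)%N by rewrite truncn_ge_nat // (le_trans _ le4x).
apply: (@le_trans _ _ (3 ^ t)%:R); last by rewrite ler_nat expn3_leq_fact.
have lt_xt : x - 1 < t%:R by have := truncnS_gt x; rewrite -natr1; lra.
rewrite natrX -[3%:R]lnK ?posrE // -expRM_natl ler_expR.
have := ln3_ge1 R; have : 0 <= t%:R :> R by []; nra.
Qed.

Lemma leq_mul_of_sqrt (R : rcfType) m n : m%:R <= Num.sqrt n%:R :> R -> (m * m <= n)%N.
Proof. by move=> h; rewrite -(ler_nat R) -ler_sqrt // natrM -expr2 sqrtr_sqr normr_nat. Qed.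

Lemma unif_prob_ge (R : realType) n N (E : pred {ffun 'I_N -> 'I_n}) b :
  (0 < n)%N -> (0 < b)%N -> (#|[set k | ~~ E k]| * b <= n ^ N)%N ->
  1 - b%:R^-1 <= @unif_prob R n N E.
Proof.
move=> n_gt0 b_gt0; have -> : [set k | ~~ E k] = ~: [set k | E k].
  by apply/setP => k; rewrite !inE.
have : (0 < #|{ffun 'I_N -> 'I_n}|)%N by rewrite card_ffun !card_ord expn_gt0 n_gt0.
have <- : #|{ffun 'I_N -> 'I_n}| = (n ^ N)%N by rewrite card_ffun !card_ord.
rewrite /unif_prob -(cardsC [set k | E k]) -!(ltr_nat R) -(ler_nat R) !natrD natrM.
set G := #|_|%:R; set B := #|_|%:R => T_gt0 le_bad.
have le_B : B <= (G + B) / b%:R by rewrite ler_pdivlMr // ltr0n.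
rewrite ler_pdivlMr // mulrBl mul1r mulrC; lra.
Qed.

Theorem corollary1 (R : realType) (c : R) (n qbar N s : nat) :
  1 <= c -> (9 <= n)%N -> (0 < qbar)%N -> (8 %| qbar)%N ->
  (qbar%:R <= 4 * Num.sqrt (n%:R) :> R) ->
  (s + qbar %/ 4 <= N)%N ->
  1 - 3^-1 * (n%:R) `^ (- (2 * c)) <=
  @unif_prob R n N (fun k => (@reappearing n N k s (qbar %/ 4))%:R
                            <= 1 + ln 3 + 2 * c * ln (n%:R) :> R).
Proof.
move=> c_ge1 n_ge9 _ dvd8q le_q_sqrt le_block.
set m := (qbar %/ 4)%N in le_block *.
have le_mmn : (m * m <= n)%N.
  apply: (@leq_mul_of_sqrt R); move: le_q_sqrt.
  by rewrite -(divnK (dvdn_trans (isT : (4 %| 8)%N) dvd8q)) natrM -/m; lra.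
have le_mN : (m <= N)%N := leq_trans (leq_addl s m) le_block.
have n_gt0 : (0 < n)%N := leq_trans (isT : (0 < 9)%N) n_ge9.
set b3 := 1 + ln 3 + 2 * c * ln n%:R.
have le4b3 : 4 <= b3.
  have ln_n_ge1 : 1 <= ln (n%:R : R).
    by rewrite (le_trans (ln3_ge1 R)) // ler_ln ?posrE ?ltr0n ?ler_nat ?(leq_trans _ n_ge9).
  by have := ln3_ge1 R; rewrite /b3; nra.
set r := (Num.truncn b3).+1.
apply: le_trans (unif_prob_ge (b := r`!) _ n_gt0 (fact_gt0 _) _).
  have n_pow_gt0 : 0 < n%:R `^ (2 * c) :> R by rewrite powR_gt0 // ltr0n.
  rewrite lerD2l lerN2 powRN -invfM lef_pV2 ?posrE ?mulr_gt0 ?ltr0n ?fact_gt0 //.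
  have -> : 3 * n%:R `^ (2 * c) = expR (b3 - 1).
    rewrite /b3 -[n%:R in LHS]lnK ?posrE ?ltr0n // -expRM -[3 in LHS]lnK ?posrE // -expRD.
    by congr expR; ring.
  exact: expR_le_fact_truncn.
rewrite (leq_trans _ (card_reappearing_geq_mul_fact s r le_mmn le_mN)) //.
rewrite leq_mul2r subset_leq_card ?orbT //; apply/subsetP => k.
by rewrite !inE -ltNge truncn_lt_nat // (le_trans _ le4b3).
Qed.
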